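(* Let $n$ be even, $c>0$, $|\lambda|<c$. Let $P_0^{(n)}$ be the Erdős–Rényi law on graphs on $\{1,\dots,n\}$ with independent edges of probability $p_n=c/n$, and $P_1^{(n)}$ the two-block stochastic block model with two fixed equally sized blocks of size $n/2$, independent edges with probability $p_n^{\mathrm{in}}=(c+\lambda)/n$ within blocks and $p_n^{\mathrm{out}}=(c-\lambda)/n$ between blocks, so that there are $N_n^{\mathrm{in}}=n^2/4-n/2$ within-block and $N_n^{\mathrm{out}}=n^2/4$ between-block pairs. Let \[\mathcal C_n:=\sup_{0\le t\le1}-\log\sum_A P_0^{(n)}(A)^{1-t}P_1^{(n)}(A)^t\] be the Chernoff information (the sum running over adjacency matrices $A$). Then \[\frac{\mathcal C_n}{n}\to J(\lambda):=\sup_{0\le t\le1}\frac14\Big[2c-c^{1-t}\big((c+\lambda)^t+(c-\lambda)^t\big)\Big].\] Moreover, as $\lambda\to0$, $J(\lambda)=\frac{\lambda^2}{16c}+O(\lambda^4/c^3)$; in particular $\mathcal C_n=J(\lambda)n+o(n)$ and $J(\lambda)=\frac14 I(\lambda)+O(\lambda^4/c^3)$, where $I(\lambda):=\frac14\big[(c+\lambda)\log\frac{c+\lambda}{c}+(c-\lambda)\log\frac{c-\lambda}{c}\big]$. *)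

From HB Require Import structures.
From mathcomp Require Import all_boot all_order all_algebra.
From mathcomp Require Import all_classical all_reals all_analysis.
Unset Printing Implicit Defensive.
Import Order.TTheory GRing.Theory Num.Theory.
Local Open Scope classical_set_scope.
Local Open Scope ring_scope.

(* Vertices are 'I_n = {0,...,n-1}.  A simple graph is identified with its
   edge set, a set of pairs (i,j) with i < j (the upper triangle of the
   adjacency matrix). *)
Definition upper_pairs (n : nat) : {set 'I_n * 'I_n} :=
  [set e : 'I_n * 'I_n | (e.1 < e.2)%N].

Definition graph_prob {R : realType} (n : nat) (q : 'I_n -> 'I_n -> R)
    (A : {set 'I_n * 'I_n}) : R :=
  \prod_(e in upper_pairs n) (if e \in A then q e.1 e.2 else 1 - q e.1 e.2).

Definition er_q {R : realType} (c : R) (n : nat) : 'I_n -> 'I_n -> R :=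
  fun _ _ => c / n%:R.

Definition same_block (n : nat) (i j : 'I_n) : bool :=
  ((i < n./2)%N == (j < n./2)%N).

Definition sbm_q {R : realType} (c lam : R) (n : nat) : 'I_n -> 'I_n -> R :=
  fun i j => if same_block n i j then (c + lam) / n%:R else (c - lam) / n%:R.

Definition P0 {R : realType} (c : R) (n : nat) (A : {set 'I_n * 'I_n}) : R :=
  graph_prob n (er_q c n) A.

Definition P1 {R : realType} (c lam : R) (n : nat) (A : {set 'I_n * 'I_n}) : R :=
  graph_prob n (sbm_q c lam n) A.

Definition chernoff_sum {R : realType} (c lam : R) (n : nat) (t : R) : R :=
  \sum_(A : {set 'I_n * 'I_n} | A \subset upper_pairs n)
     (P0 c n A `^ (1 - t)) * (P1 c lam n A `^ t).

Definition chernoff_info {R : realType} (c lam : R) (n : nat) : R :=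
  sup [set - ln (chernoff_sum c lam n t) | t in `[0, 1]].

Definition Jfun {R : realType} (c lam : R) : R :=
  sup [set (2 * c - c `^ (1 - t) * ((c + lam) `^ t + (c - lam) `^ t)) / 4
      | t in `[0, 1]].

Definition Ifun {R : realType} (c lam : R) : R :=
  ((c + lam) * ln ((c + lam) / c) + (c - lam) * ln ((c - lam) / c)) / 4.

(* The Chernoff coefficient of the two graph laws factorizes over the
   pairs of vertices: a pair contributes h(p, q, t) = p^(1-t) q^t +
   (1-p)^(1-t) (1-q)^t, where p = c/n and q = (c +- lam)/n.  Now 1 - h is the
   sum of the weighted AM-GM gaps g(p, q, t) and g(1-p, 1-q, t), where
   g(a, b, t) = (1-t) a + t b - a^(1-t) b^t is homogeneous in (a, b), and the
   second gap is O((q-p)^2); hence -ln h = g(c, c +- lam, t)/n + O(1/n^2).  Summing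
   over the n^2/4 + O(n) pairs of each kind, -ln of the Chernoff coefficient
   divided by n equals the integrand of J up to O(1/n), uniformly in t, and the
   suprema over t converge.
   For small lam, with x = lam/c, the integrand of J is
   (c/4) (2 - (1+x)^t - (1-x)^t): at t = 1/2 it is at least c x^2 / 16, and
   for every t it is at most c x^2 / 16 + O(c x^4), by Taylor bounds on exp
   and ln; likewise 4 I = c ((1+x) ln (1+x) + (1-x) ln (1-x)) = c (x^2 + O(x^4)). *)

From HB Require Import structures.
From mathcomp Require Import all_boot all_order all_algebra.
From mathcomp Require Import all_classical all_reals all_analysis.
From mathcomp Require Import ring lra zify.
Import Order.TTheory GRing.Theory Num.Theory numFieldNormedType.Exports.
Local Open Scope classical_set_scope.
Local Open Scope ring_scope.

Section ElementaryBounds.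
Context {R : realType}.
Implicit Types (f df : R -> R) (w x y z t : R).

Lemma MVT_from0 {f df} x : (forall y, is_derive y 1 f (df y)) -> x != 0 ->
  exists2 y, 0 < y * x /\ `|y| < `|x| & f x - f 0 = df y * x.
Proof.
move=> fD x0.
have fC a b : {within `[a, b], continuous f}.
  apply/continuous_subspaceT => r.
  exact/differentiable_continuous/derivable1_diffP/(@ex_derive _ _ _ _ _ _ _ (fD r)).
case: (ltgtP x 0) x0 => // [xlt0|xgt0] _.
- have [y] := MVT xlt0 (fun y _ => fD y) (fC _ _).
  rewrite in_itv/= sub0r mulrN => /andP[xy y0] fE.
  exists y; last by lra.
  by rewrite !ltr0_norm //; split; [nra | lra].
- have [y] := MVT xgt0 (fun y _ => fD y) (fC _ _).
  rewrite in_itv/= subr0 => /andP[y0 yx] ->.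
  by exists y; rewrite // !gtr0_norm //; split; [nra | lra].
Qed.

Lemma ge0_derive_sign f df x : (forall y, is_derive y 1 f (df y)) -> f 0 = 0 ->
  (forall y, 0 < y * x -> `|y| < `|x| -> 0 <= df y * x) -> 0 <= f x.
Proof.
move=> fD f0 dfx; have [->|x0] := eqVneq x 0; first by rewrite f0.
have [y [yx yltx] fxE] := MVT_from0 x fD x0.
by move: (dfx y yx yltx); rewrite -fxE f0 subr0.
Qed.

Lemma same_sign_mulr_ge0 x y z : 0 < x * y -> 0 <= x * z -> 0 <= z * y.
Proof.
move=> xy xz; have x0 : x != 0 by apply: contraTneq xy => ->; rewrite mul0r ltxx.
have : 0 <= (x * z) * (x * y) by rewrite mulr_ge0 // ltW.
by rewrite (_ : _ * _ = x ^+ 2 * (z * y)); [rewrite pmulr_rge0 ?exprn_even_gt0 | ring].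
Qed.

Lemma mulr_expR_sub1_ge0 x : 0 <= x * (expR x - 1).
Proof.
case: (ltgtP x 0) => [x0|x0|->]; last by rewrite mul0r.
- by rewrite nmulr_rge0 // subr_le0 expR_le1 ltW.
- by rewrite pmulr_rge0 // subr_ge0 ltW // expR_gt1.
Qed.

Lemma expR_taylor2_sign x : 0 <= x * (expR x - (1 + x + 2^-1 * x ^+ 2)).
Proof.
set g := fun y => expR y - (1 + y + 2^-1 * y ^+ 2).
have gD y : is_derive y 1 g (expR y - 1 - y).
  have -> : g = expR - (cst 1 + id + 2^-1 \*: id ^+ 2) by apply/funext.
  by apply: is_derive_eq; rewrite /GRing.scale /= expr1 mulr1; field.
have [->|x0] := eqVneq x 0; first by rewrite mul0r.
have [y _ gxE] := MVT_from0 x gD x0.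
have g0 : g 0 = 0 by rewrite /g expR0; ring.
have -> : x * g x = (expR y - 1 - y) * x ^+ 2 by rewrite -[g x]subr0 -g0 gxE; ring.
by rewrite mulr_ge0 ?sqr_ge0 //; have := expR_ge1Dx y; lra.
Qed.

Lemma expR_ge_taylor3 x : 1 + x + 2^-1 * x ^+ 2 + 6^-1 * x ^+ 3 <= expR x.
Proof.
set g := fun y => expR y - (1 + y + 2^-1 * y ^+ 2 + 6^-1 * y ^+ 3).
have gD y : is_derive y 1 g (expR y - (1 + y + 2^-1 * y ^+ 2)).
  have -> : g = expR - (cst 1 + id + 2^-1 \*: id ^+ 2 + 6^-1 \*: id ^+ 3).
    exact/funext.
  by apply: is_derive_eq; rewrite /GRing.scale /= expr1 mulr1; field.
suff : 0 <= g x by rewrite /g; lra.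
apply: ge0_derive_sign gD _ _; first by rewrite /g expR0; ring.
by move=> y yx _; apply: same_sign_mulr_ge0 yx (expR_taylor2_sign y).
Qed.

Lemma expR_add_expRN_ge x : 2 + x ^+ 2 <= expR x + expR (- x).
Proof.
have x3 : (- x) ^+ 3 = - x ^+ 3 by ring.
by have := expR_ge_taylor3 x; have := expR_ge_taylor3 (- x); rewrite sqrrN x3; lra.
Qed.

Lemma ln_le_sub1 x : 0 < x -> ln x <= x - 1.
Proof. by move=> x0; have := @le_ln1Dx R (x - 1); rewrite subrKC; apply; lra. Qed.

Lemma ln1B_bounds x : 0 <= x <= 2^-1 -> x <= - ln (1 - x) <= x + 2 * x ^+ 2.
Proof.
move=> /andP[x0 x_le]; have x1 : 0 < 1 - x by lra.
apply/andP; split; first by have := ln_le_sub1 _ x1; lra.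
rewrite -lnV ?posrE //; apply: le_trans (ln_le_sub1 _ _) _; first by rewrite invr_gt0.
rewrite -subr_ge0 (_ : _ - _ = x ^+ 2 * (1 - 2 * x) / (1 - x)); last by field; lra.
by rewrite divr_ge0 ?mulr_ge0 ?sqr_ge0 //; lra.
Qed.

Definition ln_taylor3 y := y - 2^-1 * y ^+ 2 + 3^-1 * y ^+ 3.

(* Both Taylor bounds on [ln (1 + y)] are proved in the variable
   [z = ln (1 + y)], so that only [expR] has to be differentiated. *)
Lemma ln1D_le_taylor3 y : -1 < y -> ln (1 + y) <= ln_taylor3 y.
Proof.
move=> y_gt; set z := ln (1 + y).
have zE : expR z - 1 = y by rewrite lnK ?posrE; [ring | lra].
set g := fun w => ln_taylor3 (expR w - 1) - w.
have gD w : is_derive w 1 g ((expR w - 1) ^+ 3).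
  have -> : g = (expR - cst 1) - 2^-1 \*: (expR - cst 1) ^+ 2
                + 3^-1 \*: (expR - cst 1) ^+ 3 - id by exact/funext.
  apply: is_derive_eq; rewrite /GRing.scale /= !subr0.
  by rewrite (_ : (expR - cst 1) w = expR w - 1) //; field.
suff : 0 <= g z by rewrite /g zE; lra.
apply: ge0_derive_sign gD _ _; first by rewrite /g /ln_taylor3 expR0; ring.
move=> w wz _; apply: same_sign_mulr_ge0 wz _.
rewrite (_ : _ * _ = (expR w - 1) ^+ 2 * (w * (expR w - 1))); last by ring.
by rewrite mulr_ge0 ?sqr_ge0 ?mulr_expR_sub1_ge0.
Qed.

Lemma taylor3_sub_le_ln1D y : - 2^-1 <= y -> ln_taylor3 y - 4 * y ^+ 4 <= ln (1 + y).
Proof.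
move=> y_ge; set z := ln (1 + y).
have zE : expR z = 1 + y by rewrite lnK ?posrE; lra.
set g := fun w => w - ln_taylor3 (expR w - 1) + 4 * (expR w - 1) ^+ 4.
have gD w : is_derive w 1 g ((expR w - 1) ^+ 3 * (16 * expR w - 1)).
  have -> : g = id - ((expR - cst 1) - 2^-1 \*: (expR - cst 1) ^+ 2
                + 3^-1 \*: (expR - cst 1) ^+ 3) + 4 \*: (expR - cst 1) ^+ 4.
    exact/funext.
  apply: is_derive_eq; rewrite /GRing.scale /= !subr0.
  by rewrite (_ : (expR - cst 1) w = expR w - 1) //; field.
suff : 0 <= g z by rewrite /g zE /ln_taylor3; lra.
apply: ge0_derive_sign gD _ _; first by rewrite /g /ln_taylor3 expR0; ring.
move=> w wz wltz.
have ew : 2^-1 <= expR w.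
  have [w0|w0] := leP 0 w; first by have := expR_ge1Dx w; lra.
  have zw : z <= w by move: wltz; rewrite !ltr0_norm //; nra.
  by rewrite -ler_expR zE in zw; lra.
rewrite mulrAC; apply: mulr_ge0; last by lra.
apply: same_sign_mulr_ge0 wz _.
rewrite (_ : _ * _ = (expR w - 1) ^+ 2 * (w * (expR w - 1))); last by ring.
by rewrite mulr_ge0 ?sqr_ge0 ?mulr_expR_sub1_ge0.
Qed.

Lemma ln1D_add_ln1B_ge x : `|x| <= 2^-1 ->
  - (x ^+ 2 + 2 * x ^+ 4) <= ln (1 + x) + ln (1 - x).
Proof.
rewrite ler_norml => /andP[x_ge x_le].
have x2 : 0 <= x ^+ 2 <= 2^-1 by rewrite sqr_ge0 /= expr2; nra.
rewrite -lnM ?posrE; try lra.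
rewrite (_ : (1 + x) * (1 - x) = 1 - x ^+ 2); last by ring.
have /andP[_] := ln1B_bounds _ x2.
by rewrite -exprM; lra.
Qed.

Lemma ln1D_sub_ln1B_sqr_ge x : `|x| <= 2^-1 ->
  4 * x ^+ 2 - 6 * x ^+ 4 <= (ln (1 + x) - ln (1 - x)) ^+ 2.
Proof.
rewrite ler_norml => /andP[x_ge x_le].
have a_lb := taylor3_sub_le_ln1D _ x_ge.
have a_ub : ln (1 + x) <= ln_taylor3 x by apply: ln1D_le_taylor3; lra.
have b_lb : ln_taylor3 (- x) - 4 * (- x) ^+ 4 <= ln (1 - x).
  by apply: taylor3_sub_le_ln1D; lra.
have b_ub : ln (1 - x) <= ln_taylor3 (- x) by apply: ln1D_le_taylor3; lra.
set e := ln (1 + x) - ln (1 - x) - (2 * x + 2 / 3 * x ^+ 3).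
have /andP[e_lb e_ub] : - (4 * x ^+ 4) <= e <= 4 * x ^+ 4.
  have x4 : (- x) ^+ 4 = x ^+ 4 by ring.
  have x3 : (- x) ^+ 3 = - x ^+ 3 by ring.
  move: a_lb a_ub b_lb b_ub; rewrite /e /ln_taylor3 x4 x3 sqrrN => *.
  by apply/andP; split; lra.
have xe : - (2 * x ^+ 4) <= x * e.
  have h1 : 0 <= (2^-1 - x) * (4 * x ^+ 4 - e) by apply: mulr_ge0; lra.
  have h2 : 0 <= (2^-1 + x) * (4 * x ^+ 4 + e) by apply: mulr_ge0; lra.
  have : (2^-1 - x) * (4 * x ^+ 4 - e) + (2^-1 + x) * (4 * x ^+ 4 + e)
    = 4 * x ^+ 4 + 2 * (x * e) by field.
  lra.
set w := 2 / 3 * x ^+ 3 + e.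
rewrite (_ : ln (1 + x) - ln (1 - x) = 2 * x + w); last by rewrite /w /e; ring.
have x4 : 0 <= x ^+ 4 by rewrite exprn_even_ge0.
rewrite -subr_ge0 (_ : (2 * x + w) ^+ 2 - _ = w ^+ 2 + 4 * (x * e) + (6 + 8 / 3) * x ^+ 4).
  by have := sqr_ge0 w; lra.
by rewrite /w; ring.
Qed.

Lemma ln1D_ln1B_weighted_bounds x : `|x| <= 2^-1 ->
  x ^+ 2 - 8 * x ^+ 4 <= (1 + x) * ln (1 + x) + (1 - x) * ln (1 - x) <= x ^+ 2 + x ^+ 4.
Proof.
rewrite ler_norml => /andP[x_ge x_le].
have px : 0 <= 1 + x by lra.
have mx : 0 <= 1 - x by lra.
have a_lb := ler_wpM2l px (taylor3_sub_le_ln1D _ x_ge).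
have a_ub : ln (1 + x) <= ln_taylor3 x by apply: ln1D_le_taylor3; lra.
have b_lb : ln_taylor3 (- x) - 4 * (- x) ^+ 4 <= ln (1 - x).
  by apply: taylor3_sub_le_ln1D; lra.
have b_ub : ln (1 - x) <= ln_taylor3 (- x) by apply: ln1D_le_taylor3; lra.
have := ler_wpM2l px a_ub; have := ler_wpM2l mx b_lb; have := ler_wpM2l mx b_ub.
have x4 : (- x) ^+ 4 = x ^+ 4 by ring.
have x3 : (- x) ^+ 3 = - x ^+ 3 by ring.
have : 0 <= x ^+ 4 by rewrite exprn_even_ge0.
move: a_lb; rewrite /ln_taylor3 x4 x3 sqrrN => *.
by apply/andP; split; lra.
Qed.

Lemma gt0_powRE x t : 0 < x -> x `^ t = expR (t * ln x).
Proof. by move=> x0; rewrite /powR gt_eqF. Qed.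

Lemma powR_sum_poly_lb t X : 0 <= t <= 1 -> 0 <= X <= 4^-1 ->
  2 - 4^-1 * X - 5 * X ^+ 2 <=
  (1 - t * (X + 2 * X ^+ 2) / 2) * (2 + t ^+ 2 * (4 * X - 6 * X ^+ 2) / 4).
Proof.
move=> /andP[t0 t1] /andP[X0 X1].
set al := t * (X + 2 * X ^+ 2) / 2; set be := t ^+ 2 * (4 * X - 6 * X ^+ 2) / 4.
have t2 : t ^+ 2 <= 1 by rewrite expr2; nra.
have al0 : 0 <= al by rewrite /al divr_ge0 // mulr_ge0 // addr_ge0 // mulr_ge0 // sqr_ge0.
have beX : be <= X by rewrite /be; nra.
have ab : al * be <= (X + 2 * X ^+ 2) / 2 * X.
  apply: (le_trans (ler_wpM2l al0 beX)); apply: ler_wpM2r => //.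
  by rewrite /al ler_pM2r ?invr_gt0 // ler_piMl // addr_ge0 // mulr_ge0 // sqr_ge0.
have sq : 0 <= X * (t - 2^-1) ^+ 2 by rewrite mulr_ge0 ?sqr_ge0.
have X3 : X ^+ 3 <= 4^-1 * X ^+ 2 by rewrite exprS; apply: ler_wpM2r; rewrite ?sqr_ge0.
have tX : t * X ^+ 2 <= X ^+ 2 by rewrite ler_piMl ?sqr_ge0.
have t2X : t ^+ 2 * X ^+ 2 <= X ^+ 2 by rewrite ler_piMl ?sqr_ge0.
rewrite (_ : (1 - al) * (2 + be) = 2 + be - 2 * al - al * be); last by ring.
by rewrite /al /be in ab *; nra.
Qed.

(* With [a = ln (1 + x)] and [b = ln (1 - x)], the sum is
   [expR (t (a + b) / 2) * 2 cosh (t (a - b) / 2)]; the first factor is close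
   to [1] and the second one is at least [2 + t^2 x^2] up to [O(x^4)]. *)
Lemma powR_1D_add_1B_ge x t : `|x| <= 2^-1 -> 0 <= t <= 1 ->
  2 - 4^-1 * x ^+ 2 - 5 * x ^+ 4 <= (1 + x) `^ t + (1 - x) `^ t.
Proof.
move=> x_small t01; have /andP[t0 t1] := t01.
have /andP[x_ge x_le] : - 2^-1 <= x <= 2^-1 by rewrite -ler_norml.
set X := x ^+ 2; have x4 : x ^+ 4 = X ^+ 2 by rewrite /X -exprM.
have X01 : 0 <= X <= 4^-1 by rewrite /X sqr_ge0 /= expr2; nra.
set a := ln (1 + x); set b := ln (1 - x).
set s := t * (a + b) / 2; set d := t * (a - b) / 2.
have -> : (1 + x) `^ t + (1 - x) `^ t = expR s * (expR d + expR (- d)).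
  rewrite !gt0_powRE ?mulrDr -?expRD; try lra.
  by rewrite /s /d /a /b; congr (expR _ + expR _); field.
have s_lb : 1 - t * (X + 2 * X ^+ 2) / 2 <= expR s.
  apply: le_trans (expR_ge1Dx s).
  have := ler_wpM2l t0 (ln1D_add_ln1B_ge _ x_small).
  by rewrite -/a -/b -/X x4 /s; lra.
have d_lb : 2 + t ^+ 2 * (4 * X - 6 * X ^+ 2) / 4 <= expR d + expR (- d).
  apply: le_trans (expR_add_expRN_ge d).
  have := ler_wpM2l (sqr_ge0 t) (ln1D_sub_ln1B_sqr_ge _ x_small).
  by rewrite -/a -/b -/X x4 (_ : d ^+ 2 = t ^+ 2 * (a - b) ^+ 2 / 4) /d; [lra | field].
rewrite x4; apply: le_trans (powR_sum_poly_lb _ _ t01 X01) _.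
apply: ler_pM; [| | exact: s_lb | exact: d_lb].
- rewrite subr_ge0 ler_pdivrMr // mul1r; nra.
- rewrite addr_ge0 // divr_ge0 // mulr_ge0 ?sqr_ge0 //; nra.
Qed.

Lemma powR_sqrt_1D_add_1B_le x : `|x| <= 1 ->
  (1 + x) `^ 2^-1 + (1 - x) `^ 2^-1 <= 2 - 4^-1 * x ^+ 2.
Proof.
rewrite ler_norml => /andP[x_ge x_le].
have x2 : x ^+ 2 <= 1 by rewrite expr2; nra.
rewrite !powR12_sqrt; try lra.
set u := Num.sqrt (1 + x); set v := Num.sqrt (1 - x).
have uv : u * v <= 1 - 2^-1 * x ^+ 2.
  rewrite -sqrtrM; last lra.
  rewrite -ler_sqr ?nnegrE ?sqrtr_ge0 //; last lra.
  rewrite sqr_sqrtr; last by apply: mulr_ge0; lra.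
  rewrite -subr_ge0 (_ : _ - _ = 4^-1 * x ^+ 4); last by field.
  by rewrite mulr_ge0 ?exprn_even_ge0.
have u2 : u ^+ 2 = 1 + x by rewrite sqr_sqrtr; lra.
have v2 : v ^+ 2 = 1 - x by rewrite sqr_sqrtr; lra.
have sq : 4 - x ^+ 2 <= (2 - 4^-1 * x ^+ 2) ^+ 2.
  rewrite -subr_ge0 (_ : _ - _ = 16^-1 * x ^+ 4); last by field.
  by rewrite mulr_ge0 ?exprn_even_ge0.
have uv0 : 0 <= u + v by rewrite addr_ge0 ?sqrtr_ge0.
rewrite -ler_sqr ?nnegrE //; last lra.
by rewrite sqrrD u2 v2 -mulr_natr; lra.
Qed.

End ElementaryBounds.

Section AMGMGap.
Context {R : realType}.
Implicit Types (a b p q s t : R).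

Definition amgm_gap a b t := (1 - t) * a + t * b - a `^ (1 - t) * b `^ t.

Lemma powR_interp_mul a b s t : 0 <= a -> 0 <= b -> 0 < s ->
  (s * a) `^ (1 - t) * (s * b) `^ t = s * (a `^ (1 - t) * b `^ t).
Proof.
move=> a0 b0 s0; rewrite !powRM ?(ltW s0) // mulrACA -powRD.
  by rewrite subrK powRr1 // ltW.
by rewrite (gt_eqF s0) implybT.
Qed.

Lemma amgm_gap_div a b s t : 0 <= a -> 0 <= b -> 0 < s ->
  amgm_gap (a / s) (b / s) t = amgm_gap a b t / s.
Proof.
move=> a0 b0 s0; rewrite /amgm_gap ![_ / s]mulrC powR_interp_mul ?invr_gt0 //.
by rewrite mulrC; ring.
Qed.

Lemma amgm_gap_le_mean a b t : amgm_gap a b t <= (1 - t) * a + t * b.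
Proof. by rewrite /amgm_gap lerBlDr lerDl mulr_ge0 ?powR_ge0. Qed.

(* Weighted AM-GM: [expR] lies above its tangent at the weighted mean of the
   logarithms. *)
Lemma amgm_gap_ge0 a b t : 0 < a -> 0 < b -> 0 <= t <= 1 -> 0 <= amgm_gap a b t.
Proof.
move=> a0 b0 /andP[t0 t1]; rewrite /amgm_gap !gt0_powRE // -expRD.
set m := (1 - t) * ln a + t * ln b.
have tangent x : 0 < x -> expR m * (1 + (ln x - m)) <= x.
  move=> x0; rewrite mulrC -ler_pdivlMr ?expR_gt0 // -{2}(lnK x0) -expRB.
  exact: expR_ge1Dx.
have t1' : 0 <= 1 - t by lra.
have := ler_wpM2l t1' (tangent a a0); have := ler_wpM2l t0 (tangent b b0).
have : (1 - t) * (expR m * (1 + (ln a - m))) + t * (expR m * (1 + (ln b - m))) = expR m.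
  by rewrite /m; ring.
lra.
Qed.

Lemma amgm_gap_le a b t : 0 < a -> 0 < b -> 0 <= t <= 1 ->
  amgm_gap a b t <= (b - a) ^+ 2 / b.
Proof.
move=> a0 b0 /andP[t0 t1]; rewrite /amgm_gap !gt0_powRE // -expRD.
rewrite (_ : _ * ln a + _ = ln a + t * (ln b - ln a)); last by ring.
rewrite expRD lnK //; set L := ln b - ln a.
have L_ge : 1 - a / b <= L.
  have := ln_le_sub1 _ (divr_gt0 a0 b0); rewrite ln_div ?posrE // /L; lra.
have := ler_wpM2l (ltW a0) (expR_ge1Dx (t * L)).
have := ler_wpM2l (ltW a0) (ler_wpM2l t0 L_ge).
have : a * (t * (1 - a / b)) = t * (b - a) - t * ((b - a) ^+ 2 / b).
  by field; rewrite gt_eqF.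
have : t * ((b - a) ^+ 2 / b) <= (b - a) ^+ 2 / b.
  by rewrite ler_piMl // divr_ge0 ?sqr_ge0 // ltW.
lra.
Qed.

Definition chernoff_bernoulli p q t :=
  p `^ (1 - t) * q `^ t + (1 - p) `^ (1 - t) * (1 - q) `^ t.

Lemma chernoff_bernoulliE p q t :
  chernoff_bernoulli p q t = 1 - amgm_gap p q t - amgm_gap (1 - p) (1 - q) t.
Proof. by rewrite /chernoff_bernoulli /amgm_gap; ring. Qed.

Lemma ln_chernoff_bernoulli p q t : 0 < p <= 4^-1 -> 0 < q <= 4^-1 -> 0 <= t <= 1 ->
  0 < chernoff_bernoulli p q t /\
  0 <= - ln (chernoff_bernoulli p q t) - amgm_gap p q t <= 7 * (p + q) ^+ 2.
Proof.
move=> /andP[p0 p1] /andP[q0 q1] t01; have /andP[t0 t1] := t01.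
rewrite chernoff_bernoulliE.
set g1 := amgm_gap p q t; set g2 := amgm_gap (1 - p) (1 - q) t.
have g1_ge0 : 0 <= g1 by exact: amgm_gap_ge0.
have g1_le : g1 <= (1 - t) * p + t * q := amgm_gap_le_mean p q t.
have t1' : 0 <= 1 - t by lra.
have mean_le : (1 - t) * p + t * q <= 4^-1 /\ (1 - t) * p + t * q <= p + q.
  have t1'' : 1 - t <= 1 by lra.
  have := ler_wpM2l t1' p1; have := ler_wpM2l t0 q1.
  by have := ler_piMl (ltW p0) t1''; have := ler_piMl (ltW q0) t1; split; lra.
have g2_ge0 : 0 <= g2 by apply: amgm_gap_ge0; lra.
have g2_le : g2 <= 4 / 3 * (q - p) ^+ 2.
  apply: le_trans (amgm_gap_le _ _ _ _ _ t01) _; try lra.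
  rewrite (_ : 1 - q - (1 - p) = - (q - p)) ?sqrrN; last by ring.
  rewrite ler_pdivrMr; last lra.
  rewrite -subr_ge0 (_ : 4 / 3 * (q - p) ^+ 2 * (1 - q) - (q - p) ^+ 2 =
                         (q - p) ^+ 2 * (1 / 3 - 4 / 3 * q)); last by field.
  by rewrite mulr_ge0 ?sqr_ge0 //; lra.
have qp_pq : (q - p) ^+ 2 <= (p + q) ^+ 2.
  rewrite -subr_ge0 (_ : _ - _ = 4 * (p * q)); last by ring.
  by rewrite mulr_ge0 // mulr_ge0 // ltW.
have qp_small : (q - p) ^+ 2 <= 16^-1.
  rewrite -subr_ge0 (_ : _ - _ = (4^-1 - (q - p)) * (4^-1 + (q - p))); last by field.
  by rewrite mulr_ge0 //; lra.
set u := g1 + g2.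
have pq2 : (p + q) ^+ 2 <= 2^-1 * (p + q) by rewrite expr2 ler_wpM2r; lra.
have u_le : u <= 5 / 3 * (p + q) by rewrite /u; lra.
have /andP[lnu_lb lnu_ub] : u <= - ln (1 - u) <= u + 2 * u ^+ 2.
  by apply: ln1B_bounds; rewrite /u; lra.
rewrite (_ : 1 - g1 - g2 = 1 - u); last by rewrite /u; ring.
have u2 : u ^+ 2 <= (5 / 3 * (p + q)) ^+ 2 by rewrite ler_sqr ?nnegrE /u; lra.
by split; [rewrite /u; lra | apply/andP; split; rewrite /u in lnu_lb lnu_ub u2 *; nra].
Qed.

End AMGMGap.

Section GraphCounting.
Local Open Scope nat_scope.

Definition same_block_pairs n : {set 'I_n * 'I_n} :=
  [set e : 'I_n * 'I_n | same_block n e.1 e.2].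

Lemma sum_ord_itv n a b : \sum_(j < n) ((a <= j) && (j < b) : nat) = minn n b - a.
Proof.
elim: n => [|n IHn]; first by rewrite big_ord0; lia.
by rewrite big_ord_recr /= IHn; case: (leqP a n); case: (ltnP n b) => /=; lia.
Qed.

Lemma card_pairs_sum n (A : {set 'I_n * 'I_n}) :
  #|A| = \sum_(i < n) \sum_(j < n) ((i, j) \in A : nat).
Proof.
by rewrite -sum1_card big_mkcond pair_bigA; apply: eq_bigr => -[i j] _; case: (_ \in A).
Qed.

Lemma card_upper_pairs n : #|upper_pairs n| = 'C(n, 2).
Proof.
rewrite card_pairs_sum exchange_big /= -bin2_sum big_mkord; apply: eq_bigr => j _.
under eq_bigr => i _ do rewrite inE /= -[i < j]/((0 <= i) && (i < j)).
by rewrite sum_ord_itv minnE subKn ?subn0 // ltnW.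
Qed.

Lemma card_cross_pairs m : #|upper_pairs (2 * m) :\: same_block_pairs (2 * m)| = m * m.
Proof.
have half : (2 * m)./2 = m by rewrite mul2n doubleK.
rewrite card_pairs_sum.
under eq_bigr => i _.
  under eq_bigr => j _ do rewrite !inE /same_block half /=.
  have -> : \sum_(j < 2 * m) (~~ ((i < m) == (j < m)) && (i < j) : nat) =
            (i < m) * \sum_(j < 2 * m) ((m <= j) && (j < 2 * m) : nat).
    case: (ltnP i m) => hi; rewrite ?mul1n ?mul0n; last first.
      apply: big1 => j _; case: (ltnP j m) => hj //=.
      by rewrite ltnNge (leq_trans (ltnW hj) hi).
    by apply: eq_bigr => j _; rewrite ltn_ord andbT; case: (ltnP j m) => //= hj; lia.
  over.
rewrite -big_distrl /= sum_ord_itv.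
rewrite -[\sum_(_ < _) (_ < m)]/(\sum_(i < 2 * m) ((0 <= i) && (i < m) : nat)).
by rewrite sum_ord_itv; lia.
Qed.

Lemma card_block_pairs m : #|upper_pairs (2 * m) :&: same_block_pairs (2 * m)| = m * (m - 1).
Proof.
have bin2m : 'C(2 * m, 2) = m * (2 * m).-1 by rewrite bin2 -mulnA mul2n doubleK.
have := cardsID (same_block_pairs (2 * m)) (upper_pairs (2 * m)).
rewrite card_cross_pairs card_upper_pairs bin2m; nia.
Qed.

End GraphCounting.

Section ChernoffSumFactorization.
Context {R : realType}.
Implicit Types (c lam s t : R).

Lemma powR_prod (I : finType) (A : {pred I}) (F : I -> R) s :
  (forall i, 0 <= F i) -> (\prod_(i in A) F i) `^ s = \prod_(i in A) F i `^ s.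
Proof.
move=> F0; suff [] : 0 <= \prod_(i in A) F i /\
                     (\prod_(i in A) F i) `^ s = \prod_(i in A) F i `^ s by [].
apply: (big_rec2 (fun x y => 0 <= x /\ x `^ s = y)) => [|i x y _ [x0 <-]].
  by rewrite powR1.
by rewrite mulr_ge0 // powRM.
Qed.

Lemma bigA_distr_subset (I : finType) (U : {set I}) (X Y : I -> R) :
  \sum_(J : {set I} | J \subset U) \prod_(i in U) (if i \in J then X i else Y i) =
  \prod_(i in U) (X i + Y i).
Proof.
pose X' i := if i \in U then X i else 0; pose Y' i := if i \in U then Y i else 1.
have -> : \prod_(i in U) (X i + Y i) = \prod_i (X' i + Y' i).
  by rewrite big_mkcond; apply: eq_bigr => i _; rewrite /X' /Y'; case: (i \in U); rewrite ?add0r.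
rewrite bigA_distr [RHS](bigID (fun J : {set I} => J \subset U)) /=.
rewrite [X in _ = _ + X]big1 ?addr0 => [|J /subsetPn[i iJ iU]]; last first.
  by rewrite (bigD1 i) //= iJ /X' (negbTE iU) mul0r.
apply: eq_big => // J JU; rewrite [LHS]big_mkcond; apply: eq_bigr => i _.
rewrite /X' /Y'; case iU: (i \in U) => //.
by rewrite (contraFF (fun iJ => fintype.subsetP JU i iJ)).
Qed.

Lemma chernoff_sum_prod c lam n t : 0 < c -> `|lam| <= c -> 2 * c <= n%:R ->
  chernoff_sum c lam n t =
  \prod_(e in upper_pairs n) chernoff_bernoulli (c / n%:R) (sbm_q c lam n e.1 e.2) t.
Proof.
move=> c0; rewrite ler_norml => /andP[lam_ge lam_le] n_ge.
have n0 : 0 < n%:R :> R by lra.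
have prob k : 0 <= k <= 2 * c -> 0 <= k / n%:R /\ 0 <= 1 - k / n%:R.
  move=> /andP[k0 k_le]; split; first by rewrite divr_ge0 // ltW.
  by rewrite subr_ge0 ler_pdivrMr // mul1r; lra.
have q_prob e : 0 <= sbm_q c lam n e.1 e.2 /\ 0 <= 1 - sbm_q c lam n e.1 e.2.
  by rewrite /sbm_q; case: ifP => _; apply: prob; lra.
have [p0 p1] : 0 <= c / n%:R /\ 0 <= 1 - c / n%:R by apply: prob; lra.
rewrite /chernoff_sum -bigA_distr_subset; apply: eq_bigr => A _.
rewrite /P0 /P1 /graph_prob !powR_prod.
- by rewrite -big_split; apply: eq_bigr => e _; case: ifP.
- by move=> e; case: ifP => _; case: (q_prob e).
- by move=> e; case: ifP => _; rewrite /er_q.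
Qed.

Lemma chernoff_sum_blocks c lam m t : 0 < c -> `|lam| <= c -> c <= m%:R ->
  chernoff_sum c lam (2 * m) t =
  chernoff_bernoulli (c / (2 * m)%:R) ((c + lam) / (2 * m)%:R) t ^+ (m * (m - 1)) *
  chernoff_bernoulli (c / (2 * m)%:R) ((c - lam) / (2 * m)%:R) t ^+ (m * m).
Proof.
move=> c0 lam_le m_ge; rewrite chernoff_sum_prod //; last by rewrite natrM; lra.
rewrite (big_setID (same_block_pairs (2 * m))) /=.
rewrite (eq_bigr (fun=> chernoff_bernoulli (c / (2 * m)%:R) ((c + lam) / (2 * m)%:R) t));
  last by move=> e; rewrite !inE /sbm_q => /andP[_ ->].
rewrite [X in _ * X](eq_bigr (fun=> chernoff_bernoulli (c / (2 * m)%:R) ((c - lam) / (2 * m)%:R) t));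
  last by move=> e; rewrite !inE /sbm_q => /andP[/negbTE -> _].
by rewrite !prodr_const card_block_pairs card_cross_pairs.
Qed.

End ChernoffSumFactorization.

Section ChernoffRate.
Context {R : realType}.
Implicit Types (c k lam s t : R).

Definition chernoff_rate c lam t :=
  (2 * c - c `^ (1 - t) * ((c + lam) `^ t + (c - lam) `^ t)) / 4.

Lemma chernoff_rateE c lam t :
  chernoff_rate c lam t = (amgm_gap c (c + lam) t + amgm_gap c (c - lam) t) / 4.
Proof. by rewrite /chernoff_rate /amgm_gap; ring. Qed.

Lemma ln_chernoff_bernoulli_div c k s t : 0 < c -> 0 < k -> 4 * c <= s -> 4 * k <= s ->
  0 <= t <= 1 ->
  0 < chernoff_bernoulli (c / s) (k / s) t /\
  0 <= - ln (chernoff_bernoulli (c / s) (k / s) t) - amgm_gap c k t / s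
    <= 7 * (c + k) ^+ 2 / s ^+ 2.
Proof.
move=> c0 k0 cs ks t01; have s0 : 0 < s by lra.
have small x : 0 < x -> 4 * x <= s -> 0 < x / s <= 4^-1.
  by move=> x0 xs; rewrite divr_gt0 //= ler_pdivrMr // mulrC ler_pdivlMr //; lra.
rewrite -(amgm_gap_div c k s t (ltW c0) (ltW k0) s0).
rewrite (_ : 7 * _ / _ = 7 * (c / s + k / s) ^+ 2); last by field; rewrite gt_eqF.
exact: ln_chernoff_bernoulli (small _ c0 cs) (small _ k0 ks) t01.
Qed.

Lemma amgm_gap_bounds c k t : 0 < c -> 0 < k <= 2 * c -> 0 <= t <= 1 ->
  0 <= amgm_gap c k t <= 2 * c.
Proof.
move=> c0 /andP[k0 k_le] t01; have /andP[t0 t1] := t01.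
rewrite amgm_gap_ge0 //=; apply: le_trans (amgm_gap_le_mean c k t) _.
by have := ler_wpM2l t0 k_le; have := ler_piMl (ltW c0) t1; lra.
Qed.

Lemma ln_chernoff_bernoulli_block c k m t : 0 < c -> 0 < k <= 2 * c -> 4 * c <= m%:R ->
  0 <= t <= 1 ->
  0 < chernoff_bernoulli (c / (2 * m)%:R) (k / (2 * m)%:R) t /\
  0 <= - ln (chernoff_bernoulli (c / (2 * m)%:R) (k / (2 * m)%:R) t)
         - amgm_gap c k t / (2 * m)%:R <= 63 * c ^+ 2 / (4 * m%:R ^+ 2).
Proof.
move=> c0 /andP[k0 k_le] m_ge t01.
have [cN kN] : 4 * c <= (2 * m)%:R /\ 4 * k <= (2 * m)%:R by rewrite natrM; lra.
have [h0 /andP[D0 D_le]] := ln_chernoff_bernoulli_div c k _ t c0 k0 cN kN t01.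
split => //; rewrite D0 /=; apply: le_trans D_le _.
rewrite natrM (_ : (2 * m%:R) ^+ 2 = 4 * m%:R ^+ 2); last by ring.
rewrite ler_wpM2r ?invr_ge0 ?mulr_ge0 ?sqr_ge0 //.
have : (c + k) ^+ 2 <= (3 * c) ^+ 2 by rewrite ler_sqr ?nnegrE; lra.
by rewrite exprMn; lra.
Qed.

(* [Li] and [Lo] stand for the logarithms of the Chernoff coefficients of a
   within-block and of a cross-block pair of vertices; on [2 M] vertices there
   are [M (M - 1)] pairs of the first kind and [M ^ 2] of the second. *)
Lemma block_sum_error c M gi go Li Lo : 0 < c -> 1 <= M -> 0 <= gi <= 2 * c ->
  0 <= - Li - gi / (2 * M) <= 63 * c ^+ 2 / (4 * M ^+ 2) ->
  0 <= - Lo - go / (2 * M) <= 63 * c ^+ 2 / (4 * M ^+ 2) ->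
  `| - (M * (M - 1) * Li + M * M * Lo) / (2 * M) - (gi + go) / 4| <= (c + 16 * c ^+ 2) / M.
Proof.
move=> c0 M1 /andP[gi0 gi_le] /andP[Di0 Di_le] /andP[Do0 Do_le].
have M0 : 0 < M by lra.
set Di := - Li - gi / (2 * M) in Di0 Di_le; set Do := - Lo - go / (2 * M) in Do0 Do_le.
set B := 63 * c ^+ 2 / (4 * M ^+ 2) in Di_le Do_le.
rewrite (_ : _ - _ = ((M - 1) * Di + M * Do) / 2 - gi / (4 * M)); last first.
  by rewrite /Di /Do; field; rewrite gt_eqF.
have Di_M : (M - 1) * Di <= (M - 1) * B by apply: ler_wpM2l; lra.
have Do_M : M * Do <= M * B by apply: ler_wpM2l; lra.
have Di_0 : 0 <= (M - 1) * Di by apply: mulr_ge0; lra.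
have Do_0 : 0 <= M * Do by apply: mulr_ge0; lra.
have MB : M * B <= 16 * c ^+ 2 / M.
  rewrite -subr_ge0 (_ : _ - _ = c ^+ 2 / (4 * M)); last by rewrite /B; field; rewrite gt_eqF.
  by rewrite divr_ge0 ?sqr_ge0 //; lra.
have gi_M : gi / (4 * M) <= c / M.
  rewrite (_ : c / M = 4 * c / (4 * M)); last by field; rewrite gt_eqF.
  by apply: ler_wpM2r; [rewrite invr_ge0; lra | lra].
have gi_M0 : 0 <= gi / (4 * M) by rewrite divr_ge0 //; lra.
rewrite (_ : (c + 16 * c ^+ 2) / M = c / M + 16 * c ^+ 2 / M); last by field; rewrite gt_eqF.
by rewrite ler_norml; apply/andP; split; lra.
Qed.

Lemma chernoff_sum_rate c lam m t : 0 < c -> `|lam| < c -> 4 * c <= m%:R ->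
  0 <= t <= 1 ->
  `| - ln (chernoff_sum c lam (2 * m) t) / (2 * m)%:R - chernoff_rate c lam t|
    <= (c + 16 * c ^+ 2) / m%:R.
Proof.
move=> c0 lam_lt m_ge t01.
have /andP[lam_ge lam_le] : - c < lam < c by rewrite -ltr_norml.
have m0 : (0 < m)%N by rewrite -(ltr_nat R) mulr0n; lra.
rewrite chernoff_sum_blocks //; [|exact: ltW|lra].
have kin : 0 < c + lam <= 2 * c by lra.
have kout : 0 < c - lam <= 2 * c by lra.
have [hi0 Di] := ln_chernoff_bernoulli_block c _ m t c0 kin m_ge t01.
have [ho0 Do] := ln_chernoff_bernoulli_block c _ m t c0 kout m_ge t01.
rewrite lnM ?posrE ?exprn_gt0 // !lnXn // -![ln _ *+ _]mulr_natl !natrM natrB //.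
rewrite chernoff_rateE; rewrite !natrM in Di Do.
apply: block_sum_error => //; first by rewrite ler1n.
exact: amgm_gap_bounds.
Qed.

End ChernoffRate.

Section Limits.
Context {R : realType}.
Implicit Types (c lam s t : R).

Lemma sup_image_div_close (T : Type) (A : set T) (f g : T -> R) (s eps B : R) :
  A !=set0 -> 0 < s -> (forall x, A x -> g x <= B) ->
  (forall x, A x -> `|f x / s - g x| <= eps) ->
  `|sup (f @` A) / s - sup (g @` A)| <= eps.
Proof.
move=> [x0 Ax0] s0 gB fg.
have f_le x : A x -> f x <= s * (g x + eps).
  by move=> Ax; have := fg x Ax; rewrite ler_norml -ler_pdivrMl // => /andP[_]; lra.
have g_le x : A x -> g x <= f x / s + eps.
  by move=> Ax; have := fg x Ax; rewrite ler_norml => /andP[]; lra.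
have g_ub : has_ubound (g @` A) by exists B => _ [x Ax <-]; exact: gB.
have f_ub : has_ubound (f @` A).
  exists (s * (B + eps)) => _ [x Ax <-]; apply: le_trans (f_le x Ax) _.
  by apply: ler_wpM2l; [exact: ltW | rewrite lerD2r gB].
have sup_f : sup (f @` A) <= s * (sup (g @` A) + eps).
  apply: ge_sup => [|_ [x Ax <-]]; first by exists (f x0), x0.
  apply: le_trans (f_le x Ax) _; apply: ler_wpM2l; first exact: ltW.
  by rewrite lerD2r; apply: ub_le_sup => //; exists x.
have sup_g : sup (g @` A) <= sup (f @` A) / s + eps.
  apply: ge_sup => [|_ [x Ax <-]]; first by exists (g x0), x0.
  apply: le_trans (g_le x Ax) _; rewrite lerD2r ler_pM2r ?invr_gt0 //.
  by apply: ub_le_sup => //; exists x.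
move: sup_f; rewrite -ler_pdivrMl // => sup_f.
by rewrite ler_norml; apply/andP; split; lra.
Qed.

Lemma cvg_dist_le_inv (u : nat -> R) (l K r : R) :
  (forall m, r <= m%:R -> `|u m - l| <= K / m%:R) -> u @ \oo --> l.
Proof.
move=> u_le; apply/cvgrPdist_le => e e0; near=> m.
have m_gt : Num.max r (Num.max 0 (K / e)) < m%:R by near: m; exact: nbhs_infty_gtr.
move: m_gt; rewrite !gt_max => /and3P[rm m0 Km].
rewrite distrC; apply: le_trans (u_le m (ltW rm)) _.
by rewrite ler_pdivrMr // mulrC -ler_pdivrMr // ltW.
Unshelve. all: by end_near.
Qed.

Lemma chernoff_info_rate_cvg c lam : 0 < c -> `|lam| < c ->
  (fun m => chernoff_info c lam (2 * m) / (2 * m)%:R) @ \oo --> Jfun c lam.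
Proof.
move=> c0 lam_lt; apply: (@cvg_dist_le_inv _ _ (c + 16 * c ^+ 2) (4 * c)) => m m_ge.
have m0 : (0 < m)%N by rewrite -(ltr_nat R) mulr0n; lra.
have /andP[lam_ge lam_le] : - c < lam < c by rewrite -ltr_norml.
rewrite /chernoff_info /Jfun.
apply: (@sup_image_div_close _ _ _ _ _ _ c).
- by exists 0; rewrite /= in_itv /= lexx ler01.
- by rewrite ltr0n muln_gt0.
- move=> t /= /[!in_itv] /= t01; rewrite -/(chernoff_rate c lam t) chernoff_rateE.
  have kin : 0 < c + lam <= 2 * c by lra.
  have kout : 0 < c - lam <= 2 * c by lra.
  have /andP[_ gi] := amgm_gap_bounds c _ t c0 kin t01.
  have /andP[_ go] := amgm_gap_bounds c _ t c0 kout t01.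
  lra.
- by move=> t /= /[!in_itv] /= t01; exact: chernoff_sum_rate.
Qed.

End Limits.

Section SmallLambda.
Context {R : realType}.
Implicit Types (c lam t : R).

Lemma chernoff_rate_scaled c lam t : 0 < c -> `|lam| < c ->
  chernoff_rate c lam t = c / 4 * (2 - (1 + lam / c) `^ t - (1 - lam / c) `^ t).
Proof.
move=> c0 lam_lt; have /andP[lam_ge lam_le] : - c < lam < c by rewrite -ltr_norml.
have scale k : - c < k -> c `^ (1 - t) * (c + k) `^ t = c * (1 + k / c) `^ t.
  move=> k_gt; rewrite -[in LHS](mulr1 c) (_ : c * 1 + k = c * (1 + k / c)).
    rewrite powR_interp_mul ?powR1 ?mul1r //.
    rewrite (_ : 1 + k / c = (c + k) / c); last by field; rewrite gt_eqF.
    by rewrite divr_ge0 //; lra.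
  by field; rewrite gt_eqF.
rewrite /chernoff_rate mulrDr scale // scale; last by lra.
by rewrite mulNr; field.
Qed.

Lemma Jfun_bounds c lam : 0 < c -> `|lam| <= c / 2 ->
  lam ^+ 2 / (16 * c) <= Jfun c lam <= lam ^+ 2 / (16 * c) + 5 / 4 * (lam ^+ 4 / c ^+ 3).
Proof.
move=> c0 lam_le; have lam_lt : `|lam| < c by lra.
set x := lam / c; have x_le : `|x| <= 2^-1.
  by rewrite /x normrM normfV (gtr0_norm c0) ler_pdivrMr //; lra.
have rateE t : chernoff_rate c lam t = c / 4 * (2 - (1 + x) `^ t - (1 - x) `^ t).
  exact: chernoff_rate_scaled.
have lowE : lam ^+ 2 / (16 * c) = c / 4 * (4^-1 * x ^+ 2) by rewrite /x; field; rewrite gt_eqF.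
have upE : lam ^+ 2 / (16 * c) + 5 / 4 * (lam ^+ 4 / c ^+ 3) =
           c / 4 * (4^-1 * x ^+ 2 + 5 * x ^+ 4) by rewrite /x; field; rewrite gt_eqF.
have c4 : 0 < c / 4 by rewrite divr_gt0.
have ub : ubound (chernoff_rate c lam @` `[0, 1]) (c / 4 * (4^-1 * x ^+ 2 + 5 * x ^+ 4)).
  move=> _ [t /= /[!in_itv] /= t01 <-]; rewrite rateE ler_pM2l //.
  by have := powR_1D_add_1B_ge x t x_le t01; lra.
rewrite /Jfun -/(chernoff_rate c lam) upE lowE; apply/andP; split; last first.
  by apply: ge_sup => //; exists (chernoff_rate c lam 0), 0 => //=; rewrite in_itv /= lexx ler01.
have half : (chernoff_rate c lam @` `[0, 1]) (chernoff_rate c lam 2^-1).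
  by exists 2^-1 => //=; rewrite in_itv /=; apply/andP; split; lra.
apply: le_trans (ub_le_sup (ex_intro _ _ ub) half).
have x_le1 : `|x| <= 1 by lra.
by rewrite rateE ler_pM2l //; have := powR_sqrt_1D_add_1B_le x x_le1; lra.
Qed.

Lemma Jfun_approx c lam : 0 < c -> `|lam| <= c / 2 ->
  `|Jfun c lam - lam ^+ 2 / (16 * c)| <= 5 / 4 * (lam ^+ 4 / c ^+ 3).
Proof.
move=> c0 lam_le; have /andP[J_ge J_le] := Jfun_bounds c lam c0 lam_le.
by rewrite ler_norml; lra.
Qed.

Lemma Ifun_approx c lam : 0 < c -> `|lam| <= c / 2 ->
  `|Ifun c lam / 4 - lam ^+ 2 / (16 * c)| <= 2^-1 * (lam ^+ 4 / c ^+ 3).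
Proof.
move=> c0 lam_le; set x := lam / c; have x_le : `|x| <= 2^-1.
  by rewrite /x normrM normfV (gtr0_norm c0) ler_pdivrMr //; lra.
have c16 : 0 < c / 16 by rewrite divr_gt0.
have cx : (c + lam) / c = 1 + x by rewrite /x; field; rewrite gt_eqF.
have cx' : (c - lam) / c = 1 - x by rewrite /x; field; rewrite gt_eqF.
rewrite /Ifun cx cx'.
rewrite (_ : _ - _ = c / 16 * ((1 + x) * ln (1 + x) + (1 - x) * ln (1 - x) - x ^+ 2)); last first.
  by rewrite /x; field; rewrite gt_eqF.
rewrite (_ : 2^-1 * _ = c / 16 * (8 * x ^+ 4)); last by rewrite /x; field; rewrite gt_eqF.
rewrite normrM (gtr0_norm c16) ler_pM2l // ler_norml.
have : 0 <= x ^+ 4 by exact: exprn_even_ge0.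
by have /andP[] := ln1D_ln1B_weighted_bounds x x_le; lra.
Qed.

End SmallLambda.

Theorem lemma4p2 (R : realType) (c : R) (hc : 0 < c) :
  (forall lam : R, `|lam| < c ->
     (fun m : nat => chernoff_info c lam (2 * m)%N / (2 * m)%:R)
       @ \oo --> Jfun c lam)
  /\ (exists K delta : R, 0 < K /\ 0 < delta /\
        forall lam : R, `|lam| < delta ->
          `|Jfun c lam - lam ^+ 2 / (16 * c)| <= K * (lam ^+ 4 / c ^+ 3))
  /\ (exists K delta : R, 0 < K /\ 0 < delta /\
        forall lam : R, `|lam| < delta ->
          `|Jfun c lam - Ifun c lam / 4| <= K * (lam ^+ 4 / c ^+ 3)).
Proof.
split; first by move=> lam; exact: chernoff_info_rate_cvg.
have c2 : 0 < c / 2 by rewrite divr_gt0.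
have q0 lam : 0 <= lam ^+ 4 / c ^+ 3.
  by apply: divr_ge0; [exact: exprn_even_ge0 | exact: exprn_ge0 (ltW hc)].
split; exists 2, (c / 2); do 2 split => //; move=> lam /ltW lam_le.
- by have := Jfun_approx c lam hc lam_le; have := q0 lam; lra.
- have := Jfun_approx c lam hc lam_le; have := Ifun_approx c lam hc lam_le.
  by have := q0 lam; rewrite !ler_norml; lra.
Qed.
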